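(* Let $\mathcal C$ be a full subcategory of grading-restricted generalized $V$-modules for a vertex operator algebra $V$ such that $0\in\mathcal C$, $\mathcal C$ is closed under submodules, quotients and finite direct sums, and every module in $\mathcal C$ is finitely generated. Let $\alpha:I\to\mathcal C$ be a direct system over a directed set $I$ with transition maps $f_i^j$, and $(\varinjlim\alpha,\{\phi_i\})$ its direct limit in the category of weak $V$-modules. Then for each $i\in I$ there exists $j\in I$ with $j\ge i$ such that $\ker\phi_i=\ker f_i^j$.
   Context: Direct limits in the category of weak $V$-modules: $(\varinjlim\alpha,\{\phi_i\})$ with $\phi_j\circ f_i^j=\phi_i$ for $i\le j$, universal among such targets, where $f_i^j=\alpha(i\to j)$. *)

From HB Require Import structures.
From mathcomp Require Import all_boot all_order all_algebra.
From mathcomp Require Import complex Rstruct.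
Set Implicit Arguments.
Unset Strict Implicit.
Unset Printing Implicit Defensive.
Import Order.TTheory GRing.Theory Num.Theory.
Local Open Scope ring_scope.

Notation CC := (Rdefinitions.R[i]).

Section Generic.
Variable K : fieldType.

Definition gbinom (m : int) (i : nat) : K :=
  (\prod_(k < i) (m%:~R - (k : nat)%:R)) / (i`!)%:R.

Definition lin_on (W1 W2 : lmodType K) (f : W1 -> W2) : Prop :=
  forall (a : K) (x y : W1), f (a *: x + y) = a *: f x + f y.

(* Y(u,x) w = sum_n (mW u n w) x^{-n-1} : lower truncation *)
Definition truncated (V W : lmodType K) (mW : V -> int -> W -> W) : Prop :=
  forall (u : V) (w : W), exists N : int, forall n : int, N <= n -> mW u n w = 0.

(* Jacobi identity, in the equivalent component (Borcherds) form:
   sum_{i>=0} binom(m,i) (u_{l+i} v)_{m+n-i} w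
     = sum_{i>=0} (-1)^i binom(l,i) (u_{l+m-i} v_{n+i} w - (-1)^l v_{l+n-i} u_{m+i} w).
   Both sums have finitely many nonzero terms (truncation); we state that
   all sufficiently long partial sums agree. *)
Definition borcherds (V W : lmodType K) (mV : V -> int -> V -> V)
    (mW : V -> int -> W -> W) : Prop :=
  forall (u v : V) (w : W) (l m n : int), exists N0 : nat, forall N : nat,
    (N0 <= N)%N ->
    \sum_(i < N) gbinom m i *: mW (mV u (l + (i : nat)%:Z) v) (m + n - (i : nat)%:Z) w
    = \sum_(i < N) ((-1) ^+ i * gbinom l i) *:
        (mW u (l + m - (i : nat)%:Z) (mW v (n + (i : nat)%:Z) w)
         - (-1) ^ l *: mW v (l + n - (i : nat)%:Z) (mW u (m + (i : nat)%:Z) w)).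

Definition fin_dim (W : lmodType K) (P : W -> Prop) : Prop :=
  exists s : seq W, forall w, P w ->
    exists c : 'I_(size s) -> K, w = \sum_(i < size s) c i *: s`_i.

Definition gen_eig (W : lmodType K) (L0 : W -> W) (a : K) (w : W) : Prop :=
  exists k : nat, iter k (fun y => L0 y - a *: y) w = 0.

End Generic.

(* Vertex operator algebra over a field K (FLM / LL definition).
   vY u n = u_n, the coefficient of x^{-n-1} in Y(u,x);
   L(n) = cvec_{n+1}. *)
Record voa (K : fieldType) := Voa {
  vsp :> lmodType K;
  vY : vsp -> int -> vsp -> vsp;
  vac : vsp;
  cvec : vsp;
  cch : K;
  vY_lin : forall u n, lin_on (vY u n);
  vY_linl : forall n w, lin_on (fun u => vY u n w);
  vY_trunc : truncated vY;
  vY_vac : forall n w, vY vac n w = if n == -1 then w else 0;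
  vY_creat : forall v, vY v (-1) vac = v /\ (forall n : int, 0 <= n -> vY v n vac = 0);
  vY_jacobi : borcherds vY vY;
  vY_vir : forall (m n : int) (v : vsp),
    vY cvec (m + 1) (vY cvec (n + 1) v) - vY cvec (n + 1) (vY cvec (m + 1) v)
    = (m - n)%:~R *: vY cvec (m + n + 1) v
      + ((if m + n == 0 then (m ^+ 3 - m)%:~R / 12 else 0) * cch) *: v;
  (* V = (+)_{n in Z} V_(n), V_(n) = {v | L(0) v = n v} *)
  vY_grad : forall v, exists s : seq (int * vsp),
    (forall x, x \in s -> vY cvec 1 x.2 = (x.1)%:~R *: x.2) /\ v = \sum_(x <- s) x.2;
  vY_findim : forall n : int, fin_dim (fun v => vY cvec 1 v = n%:~R *: v);
  vY_lowbd : exists N : int, forall n : int, n < N ->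
    forall v, vY cvec 1 v = n%:~R *: v -> v = 0;
  cvec_wt : vY cvec 1 cvec = 2%:R *: cvec;
  (* L(-1)-derivative property: Y(L(-1)v, x) = d/dx Y(v, x) *)
  vY_deriv : forall v n w, vY (vY cvec 0 v) n w = - n%:~R *: vY v (n - 1) w
}.
Arguments vY {K} _.
Arguments vac {K} _.
Arguments cvec {K} _.

Record wmod (K : fieldType) (V : voa K) := Wmod {
  wcar :> lmodType K;
  wY : V -> int -> wcar -> wcar;
  wY_lin : forall u n, lin_on (wY u n);
  wY_linl : forall n w, lin_on (fun u => wY u n w);
  wY_trunc : truncated wY;
  wY_vac : forall n w, wY (vac V) n w = if n == -1 then w else 0;
  wY_jacobi : borcherds (vY V) wY
}.
Arguments wY {K V} _.

Section Modules.
Variables (K : fieldType) (V : voa K).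

Definition L0 (W : wmod V) : W -> W := wY W (cvec V) 1.

Definition is_grmod (W : wmod V) : Prop :=
  [/\ (forall w : W, exists s : seq (K * W),
          (forall x, x \in s -> gen_eig (@L0 W) x.1 x.2) /\ w = \sum_(x <- s) x.2),
      (forall a : K, fin_dim (gen_eig (@L0 W) a)) &
      (forall a : K, exists M : int, forall m : int, m < M ->
          forall w : W, gen_eig (@L0 W) (a + m%:~R) w -> w = 0)].

Record vhom (W1 W2 : wmod V) := Hom {
  hfun :> W1 -> W2;
  hfun_lin : lin_on hfun;
  hfun_Y : forall (u : V) (n : int) (w : W1), hfun (wY W1 u n w) = wY W2 u n (hfun w)
}.

Definition submodule (W : wmod V) (S : W -> Prop) : Prop :=
  [/\ S 0, (forall (a : K) x y, S x -> S y -> S (a *: x + y)) &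
      (forall (u : V) (n : int) x, S x -> S (wY W u n x))].

Definition fin_gen (W : wmod V) : Prop :=
  exists s : seq W, forall S : W -> Prop, submodule S ->
    (forall x, x \in s -> S x) -> forall w, S w.

Definition good_subcat (Ccl : wmod V -> Prop) : Prop :=
  (forall W, Ccl W -> is_grmod W) /\
  [/\
      (forall Z : wmod V, (forall z : Z, z = 0) -> Ccl Z),
      (forall (W M : wmod V) (g : vhom M W), Ccl W -> injective g -> Ccl M),
      (forall (W M : wmod V) (g : vhom W M), Ccl W -> (forall y : M, exists x : W, g x = y) -> Ccl M),
      (* closed under (binary, hence finite) direct sums: M is a biproduct *)
      (forall (W1 W2 M : wmod V) (i1 : vhom W1 M) (i2 : vhom W2 M)
              (p1 : vhom M W1) (p2 : vhom M W2),
          Ccl W1 -> Ccl W2 ->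
          (forall x, p1 (i1 x) = x) -> (forall x, p2 (i2 x) = x) ->
          (forall m, i1 (p1 m) + i2 (p2 m) = m) -> Ccl M) &
      (forall W, Ccl W -> fin_gen W)].

Definition directed (I : Type) (le : rel I) : Prop :=
  [/\ (forall i, le i i), (forall i j k, le i j -> le j k -> le i k) &
      (forall i j, exists k, le i k && le j k)].

Definition dir_system (I : Type) (le : rel I) (alpha : I -> wmod V)
    (f : forall i j, le i j -> vhom (alpha i) (alpha j)) : Prop :=
  (forall i (h : le i i) x, f i i h x = x) /\
  (forall i j k (hij : le i j) (hjk : le j k) (hik : le i k) x,
      f j k hjk (f i j hij x) = f i k hik x).

Definition is_dir_limit (I : Type) (le : rel I) (alpha : I -> wmod V)
    (f : forall i j, le i j -> vhom (alpha i) (alpha j))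
    (L : wmod V) (phi : forall i, vhom (alpha i) L) : Prop :=
  (forall i j (h : le i j) x, phi j (f i j h x) = phi i x) /\
  (forall (W : wmod V) (psi : forall i, vhom (alpha i) W),
      (forall i j (h : le i j) x, psi j (f i j h x) = psi i x) ->
      exists g : vhom L W, (forall i x, g (phi i x) = psi i x) /\
        (forall g' : vhom L W, (forall i x, g' (phi i x) = psi i x) ->
           forall y, g' y = g y)).

End Modules.

From Pilot Require Import Defs.
From HB Require Import structures.
From mathcomp Require Import all_boot all_order all_algebra.
From mathcomp Require Import complex Rstruct.
From mathcomp Require Import boolp.
Set Implicit Arguments.
Unset Strict Implicit.
Unset Printing Implicit Defensive.
Import Order.TTheory GRing.Theory Num.Theory.
Local Open Scope ring_scope.

(* The stages glue to a weak module limW whose vectors are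
     germ classes of pairs (i, x), two pairs being identified when they become
     equal at a common later stage; the classes incl_i form a compatible
     family.  The universal property of L gives g : L -> limW with
     g (phi_i x) = incl_i x, so phi_i x = 0 forces f_i^k x = 0 for some k.
   - Finite generation.  ker phi_i is a submodule of alpha i, hence an object
     of C, hence finitely generated.  A common later stage j of its finitely
     many generators kills all of them, and since ker f_i^j is a submodule it
     contains ker phi_i.  Conversely phi_j o f_i^j = phi_i. *)

HB.instance Definition _ (K : fieldType) (V : voa K) (W1 W2 : wmod V)
    (g : vhom W1 W2) :=
  GRing.isLinear.Build K W1 W2 *:%R (hfun g) (hfun_lin g).

HB.instance Definition _ (K : fieldType) (V : voa K) (W : wmod V) (u : V) (n : int) :=
  GRing.isLinear.Build K W W *:%R (wY W u n) (wY_lin u n).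

Record submod (K : fieldType) (V : voa K) (W : wmod V) := Submod {
  smem : W -> Prop;
  smemP : submodule smem }.

Lemma ker_submodule (K : fieldType) (V : voa K) (W1 W2 : wmod V) (g : vhom W1 W2) :
  submodule (fun x => g x = 0).
Proof.
split=> [|a x y gx gy|u n x gx].
- exact: raddf0.
- by rewrite hfun_lin gx gy scaler0 addr0.
- by rewrite hfun_Y gx raddf0.
Qed.

Section SubmoduleVectors.
Variables (K : fieldType) (V : voa K) (W : wmod V) (M : submod W).

Definition smemb : pred W := fun x => `[< smem M x >].

Lemma smemb_submod_closed : GRing.submod_closed smemb.
Proof.
case: (smemP M) => S0 Scomb _; split=> [|a x y]; first exact/asboolP.
by move=> /asboolP Sx /asboolP Sy; apply/asboolP/Scomb.
Qed.

Lemma smembY u n x : smemb x -> smemb (wY W u n x).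
Proof. by case: (smemP M) => _ _ SY /asboolP Sx; apply/asboolP/SY. Qed.
End SubmoduleVectors.

HB.instance Definition _ (K : fieldType) (V : voa K) (W : wmod V) (M : submod W) :=
  GRing.isSubmodClosed.Build K W (smemb M)
    (GRing.submod_closed_semi (smemb_submod_closed M)).

Definition subvec (K : fieldType) (V : voa K) (W : wmod V) (M : submod W) :=
  {x : W | smemb M x}.

HB.instance Definition _ (K : fieldType) (V : voa K) (W : wmod V) (M : submod W) :=
  [isSub for (@sval _ (smemb M) : subvec M -> W)].
HB.instance Definition _ (K : fieldType) (V : voa K) (W : wmod V) (M : submod W) :=
  [Choice of subvec M by <:].
HB.instance Definition _ (K : fieldType) (V : voa K) (W : wmod V) (M : submod W) :=
  [SubChoice_isSubLmodule of subvec M by <:].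

Section SubmoduleModule.
Variables (K : fieldType) (V : voa K) (W : wmod V) (M : submod W).
Local Notation U := (subvec M).

Definition subY (u : V) (n : int) (x : U) : U := Sub (wY W u n (val x)) (smembY u n (valP x)).

Lemma subY_lin u n : lin_on (subY u n).
Proof. by move=> a x y; apply: val_inj; rewrite /= wY_lin. Qed.

Lemma subY_linl n x : lin_on (fun u => subY u n x).
Proof. by move=> a u v; apply: val_inj; rewrite /= wY_linl. Qed.

Lemma subY_trunc : truncated subY.
Proof.
move=> u x; have [N HN] := wY_trunc u (val x).
by exists N => n Nn; apply: val_inj; rewrite /= HN.
Qed.

Lemma subY_vac n x : subY (vac V) n x = if n == -1 then x else 0.
Proof. by apply: val_inj; rewrite /= wY_vac; case: ifP. Qed.

Lemma subY_jacobi : borcherds (vY V) subY.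
Proof.
move=> u v x l m n; have [N0 HN] := wY_jacobi u v (val x) l m n.
by exists N0 => N N0N; apply: val_inj; rewrite !raddf_sum HN.
Qed.

Definition submodW : wmod V := Wmod subY_lin subY_linl subY_trunc subY_vac subY_jacobi.

Definition submod_emb : vhom submodW W :=
  @Defs.Hom _ _ submodW W val (fun a x y => erefl) (fun u n x => erefl).

Lemma submod_emb_inj : injective submod_emb.
Proof. exact: val_inj. Qed.
End SubmoduleModule.

(* A direct system of weak V-modules over a directed set, together with one
   index, which names the zero vector of the limit. *)
Record dirsys (K : fieldType) (V : voa K) := DirSys {
  ds_idx : Type;
  ds_le : rel ds_idx;
  ds_mod : ds_idx -> wmod V;
  ds_map : forall i j, ds_le i j -> vhom (ds_mod i) (ds_mod j);
  ds_directed : directed ds_le;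
  ds_system : dir_system ds_map;
  ds_base : ds_idx }.

Section DirectSystem.
Variables (K : fieldType) (V : voa K) (D : dirsys V).
Local Notation I := (ds_idx D).
Local Notation le := (@ds_le _ _ D).
Local Notation alpha := (@ds_mod _ _ D).
Local Notation f := (@ds_map _ _ D).

Lemma ds_le_refl i : le i i.
Proof. by case: (ds_directed D). Qed.

Lemma ds_le_trans i j k : le i j -> le j k -> le i k.
Proof. by case: (ds_directed D) => _ le_tr _; apply: le_tr. Qed.

Definition ub (i j : I) : I := sval (cid (let: And3 _ _ up := ds_directed D in up i j)).

Lemma ub_l i j : le i (ub i j).
Proof. by rewrite /ub; case: cid => k /= /andP[]. Qed.

Lemma ub_r i j : le j (ub i j).
Proof. by rewrite /ub; case: cid => k /= /andP[]. Qed.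

Lemma ds_map_id i (h : le i i) x : f h x = x.
Proof. by case: (ds_system D) => map_id _; apply: map_id. Qed.

Lemma ds_map_comp i j k (hij : le i j) (hjk : le j k) (hik : le i k) x :
  f hjk (f hij x) = f hik x.
Proof. by case: (ds_system D) => _ map_comp; apply: map_comp. Qed.

Lemma ds_map_irr i j (h h' : le i j) x : f h x = f h' x.
Proof. by rewrite (bool_irrelevance h h'). Qed.

Lemma ds_map_later i j k (hi : le i k) (hj : le j k) k' (hk : le k k') x y :
  f hi x = f hj y -> f (ds_le_trans hi hk) x = f (ds_le_trans hj hk) y.
Proof. by move=> E; rewrite -(ds_map_comp hi hk) E; apply: ds_map_comp. Qed.

Lemma ds_kill_seq i (s : seq (alpha i)) :
  (forall x, x \in s -> exists k (h : le i k), f h x = 0) ->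
  exists j (h : le i j), forall x, x \in s -> f h x = 0.
Proof.
elim: s => [|x s IHs] kill_s; first by exists i, (ds_le_refl i).
have [k1 [h1 E1]] := kill_s x (mem_head x s).
have [k2 [h2 E2]] := IHs (fun y sy => kill_s y (mem_behead (s := x :: s) sy)).
exists (ub k1 k2), (ds_le_trans h1 (ub_l k1 k2)) => y; rewrite inE => /orP[/eqP-> | sy].
  by rewrite -(ds_map_comp h1 (ub_l k1 k2)) E1 raddf0.
rewrite (ds_map_irr _ (ds_le_trans h2 (ub_r k1 k2))) -(ds_map_comp h2 (ub_r k1 k2)).
by rewrite E2 // raddf0.
Qed.

Definition dpair := {i : I & alpha i}.

Definition germ (s t : dpair) : Prop :=
  exists k (hs : le (tag s) k) (ht : le (tag t) k), f hs (tagged s) = f ht (tagged t).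

Lemma germ_refl s : germ s s.
Proof. by exists (tag s), (ds_le_refl _), (ds_le_refl _). Qed.

Lemma germ_sym s t : germ s t -> germ t s.
Proof. by case=> k [hs [ht E]]; exists k, ht, hs. Qed.

Lemma germ_trans s t r : germ s t -> germ t r -> germ s r.
Proof.
case=> k1 [a1 [b1 E1]] [k2 [a2 [b2 E2]]].
exists (ub k1 k2), (ds_le_trans a1 (ub_l k1 k2)), (ds_le_trans b2 (ub_r k1 k2)).
rewrite (ds_map_later (ub_l k1 k2) E1).
rewrite (ds_map_irr (ds_le_trans b1 _) (ds_le_trans a2 (ub_r k1 k2))).
exact: ds_map_later.
Qed.

(* The vectors of the direct limit: germ classes, represented as predicates. *)
Definition limvec := {P : dpair -> Prop | exists s, P = germ s}.

Definition germ_class (s : dpair) : limvec := exist _ (germ s) (ex_intro _ s erefl).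

Lemma germ_classP s t : germ_class s = germ_class t <-> germ s t.
Proof.
split=> [/(f_equal sval) /= -> | st]; first exact: germ_refl.
apply: eq_exist; apply: funext => r; apply: propext.
by split; [apply: germ_trans (germ_sym st) | apply: germ_trans st].
Qed.

Definition germ_repr (q : limvec) : dpair := sval (cid (svalP q)).

Lemma germ_reprK q : germ_class (germ_repr q) = q.
Proof. by case: q => P hP; rewrite /germ_repr /=; case: cid => s /= E; apply: eq_exist. Qed.

Definition incl (i : I) (x : alpha i) : limvec := germ_class (Tagged alpha x).
Arguments incl : clear implicits.

Lemma incl_eq i x j y :
  incl i x = incl j y <-> exists k (hi : le i k) (hj : le j k), f hi x = f hj y.
Proof. exact: germ_classP. Qed.

Lemma incl_map i j (h : le i j) x : incl i x = incl j (f h x).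
Proof. by apply/incl_eq; exists j, h, (ds_le_refl j); rewrite ds_map_id. Qed.

Lemma incl_later q : exists j, forall m, le j m -> exists x, q = incl m x.
Proof.
exists (tag (germ_repr q)) => m h; exists (f h (tagged (germ_repr q))).
by rewrite -incl_map /incl -{1}(germ_reprK q); case: (germ_repr q).
Qed.

Lemma incl_surj q : exists i x, q = incl i x.
Proof. by have [j Hj] := incl_later q; have [x ->] := Hj j (ds_le_refl j); exists j, x. Qed.

Lemma incl_common2 q1 q2 : exists t : {m : I & (alpha m * alpha m)%type},
  q1 = incl (tag t) (tagged t).1 /\ q2 = incl (tag t) (tagged t).2.
Proof.
have [j1 H1] := incl_later q1; have [j2 H2] := incl_later q2.
have [x ->] := H1 _ (ub_l j1 j2); have [y ->] := H2 _ (ub_r j1 j2).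
by exists (Tagged (fun m => (alpha m * alpha m)%type) (x, y)).
Qed.

Lemma incl_common3 q1 q2 q3 :
  exists m x y z, [/\ q1 = incl m x, q2 = incl m y & q3 = incl m z].
Proof.
have [j1 H1] := incl_later q1; have [j2 H2] := incl_later q2.
have [j3 H3] := incl_later q3; pose m := ub (ub j1 j2) j3.
have [x ->] := H1 m (ds_le_trans (ub_l j1 j2) (ub_l _ j3)).
have [y ->] := H2 m (ds_le_trans (ub_r j1 j2) (ub_l _ j3)).
have [z ->] := H3 m (ub_r _ j3).
by exists m, x, y, z.
Qed.

Definition lift2 (g : forall l, alpha l -> alpha l -> alpha l) (q1 q2 : limvec) :=
  let t := sval (cid (incl_common2 q1 q2)) in incl (tag t) (g _ (tagged t).1 (tagged t).2).

Lemma lift2E (g : forall l, alpha l -> alpha l -> alpha l) :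
  (forall l m (h : le l m) x y, f h (g l x y) = g m (f h x) (f h y)) ->
  forall l x y, lift2 g (incl l x) (incl l y) = incl l (g l x y).
Proof.
move=> g_map l x y; rewrite /lift2; case: cid => [[m [x' y']]] /=.
case=> /esym/incl_eq[k1 [a1 [b1 E1]]] /esym/incl_eq[k2 [a2 [b2 E2]]].
apply/incl_eq; exists (ub k1 k2).
exists (ds_le_trans a1 (ub_l k1 k2)), (ds_le_trans b1 (ub_l k1 k2)).
rewrite !g_map; congr (g _ _ _); first exact: ds_map_later.
rewrite (ds_map_irr _ (ds_le_trans a2 (ub_r k1 k2))).
rewrite (ds_map_irr (ds_le_trans b1 _) (ds_le_trans b2 (ub_r k1 k2))).
exact: ds_map_later.
Qed.

Definition lift1 (g : forall l, alpha l -> alpha l) (q : limvec) :=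
  lift2 (fun l x _ => g l x) q q.

Lemma lift1E (g : forall l, alpha l -> alpha l) :
  (forall l m (h : le l m) x, f h (g l x) = g m (f h x)) ->
  forall l x, lift1 g (incl l x) = incl l (g l x).
Proof. by move=> g_map l x; apply: lift2E => l' m h y _; apply: g_map. Qed.

Definition limzero : limvec := incl (ds_base D) 0.
Definition limadd : limvec -> limvec -> limvec := lift2 (fun l x y => x + y).
Definition limopp : limvec -> limvec := lift1 (fun l x => - x).
Definition limscale (a : K) : limvec -> limvec := lift1 (fun l x => a *: x).
Definition limY (u : V) (n : int) : limvec -> limvec :=
  lift1 (fun l x => wY (alpha l) u n x).

Lemma incl0 l : incl l 0 = limzero.
Proof.
apply/incl_eq; exists (ub l (ds_base D)), (ub_l _ _), (ub_r _ _).
by rewrite !raddf0.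
Qed.

Lemma inclD l x y : limadd (incl l x) (incl l y) = incl l (x + y).
Proof. by apply: lift2E => *; apply: raddfD. Qed.

Lemma inclN l x : limopp (incl l x) = incl l (- x).
Proof. by apply: lift1E => *; apply: raddfN. Qed.

Lemma inclZ a l x : limscale a (incl l x) = incl l (a *: x).
Proof. by apply: lift1E => *; apply: linearZ. Qed.

Lemma inclY u n l x : limY u n (incl l x) = incl l (wY (alpha l) u n x).
Proof. by apply: lift1E => *; apply: hfun_Y. Qed.

(* The vector space laws hold in the limit since they hold at a common stage. *)
Lemma limaddA : associative limadd.
Proof.
move=> q1 q2 q3; have [m [x [y [z [-> -> ->]]]]] := incl_common3 q1 q2 q3.
by rewrite !inclD addrA.
Qed.

Lemma limaddC : commutative limadd.
Proof.
by move=> q1 q2; have [[m [x y]] /= [-> ->]] := incl_common2 q1 q2; rewrite !inclD addrC.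
Qed.

Lemma limadd0 : left_id limzero limadd.
Proof. by move=> q; have [l [x ->]] := incl_surj q; rewrite -(incl0 l) inclD add0r. Qed.

Lemma limaddN : left_inverse limzero limopp limadd.
Proof. by move=> q; have [l [x ->]] := incl_surj q; rewrite inclN inclD addNr incl0. Qed.

Lemma limscaleA a b q : limscale a (limscale b q) = limscale (a * b) q.
Proof. by have [l [x ->]] := incl_surj q; rewrite !inclZ scalerA. Qed.

Lemma limscale1 : left_id 1 limscale.
Proof. by move=> q; have [l [x ->]] := incl_surj q; rewrite inclZ scale1r. Qed.

Lemma limscaleDr : right_distributive limscale limadd.
Proof.
move=> a q1 q2; have [[m [x y]] /= [-> ->]] := incl_common2 q1 q2.
by rewrite !(inclD, inclZ) scalerDr.
Qed.

Lemma limscaleDl q : {morph limscale^~ q : a b / a + b >-> limadd a b}.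
Proof. by move=> a b; have [l [x ->]] := incl_surj q; rewrite !(inclD, inclZ) scalerDl. Qed.
End DirectSystem.
Arguments incl {K V} D i x.

(* The limit is a vector space; the classical axioms provide the required
   (noncomputable) equality test and choice operator. *)
HB.instance Definition _ (K : fieldType) (V : voa K) (D : dirsys V) :=
  gen_eqMixin (limvec D).
HB.instance Definition _ (K : fieldType) (V : voa K) (D : dirsys V) :=
  gen_choiceMixin (limvec D).
HB.instance Definition _ (K : fieldType) (V : voa K) (D : dirsys V) :=
  GRing.isZmodule.Build (limvec D) (@limaddA _ _ D) (@limaddC _ _ D)
    (@limadd0 _ _ D) (@limaddN _ _ D).
HB.instance Definition _ (K : fieldType) (V : voa K) (D : dirsys V) :=
  GRing.Zmodule_isLmodule.Build K (limvec D) (@limscaleA _ _ D) (@limscale1 _ _ D)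
    (@limscaleDr _ _ D) (@limscaleDl _ _ D).

Lemma incl_lin (K : fieldType) (V : voa K) (D : dirsys V) (l : ds_idx D) :
  lin_on (incl D l).
Proof. by move=> a x y; rewrite -inclD -inclZ. Qed.

HB.instance Definition _ (K : fieldType) (V : voa K) (D : dirsys V) (l : ds_idx D) :=
  GRing.isLinear.Build K (@ds_mod K V D l) (limvec D) *:%R (incl D l) (@incl_lin K V D l).

Section LimitModule.
Variables (K : fieldType) (V : voa K) (D : dirsys V).
Local Notation alpha := (@ds_mod _ _ D).
Local Notation le := (@ds_le _ _ D).
Local Notation f := (@ds_map _ _ D).

Lemma limY_lin u n : lin_on (@limY _ _ D u n).
Proof.
move=> a q1 q2; have [[m [x y]] /= [-> ->]] := incl_common2 q1 q2.
by rewrite -(linearP (incl D m)) !inclY wY_lin (linearP (incl D m)).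
Qed.

Lemma limY_linl n q : lin_on (fun u => @limY _ _ D u n q).
Proof.
move=> a u v; have [j [x ->]] := incl_surj q.
by rewrite !inclY wY_linl (linearP (incl D j)).
Qed.

Lemma limY_trunc : truncated (@limY _ _ D).
Proof.
move=> u q; have [j [x ->]] := incl_surj q; have [N HN] := wY_trunc u x.
by exists N => n Nn; rewrite inclY HN // raddf0.
Qed.

Lemma limY_vac n q : @limY _ _ D (vac V) n q = if n == -1 then q else 0.
Proof.
have [j [x ->]] := incl_surj q.
by rewrite inclY wY_vac; case: ifP => // _; rewrite raddf0.
Qed.

Lemma limY_jacobi : borcherds (vY V) (@limY _ _ D).
Proof.
move=> u v q l m n; have [j [x ->]] := incl_surj q.
have [N0 HN] := wY_jacobi u v x l m n; exists N0 => N /HN {}HN.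
under eq_bigr => k _ do rewrite inclY -(linearZZ (incl D j)).
under [RHS]eq_bigr => k _ do
  rewrite !inclY -(linearZZ (incl D j)) -(raddfB (incl D j)) -(linearZZ (incl D j)).
by rewrite -!(raddf_sum (incl D j)) HN.
Qed.

Definition limW : wmod V := Wmod limY_lin limY_linl limY_trunc limY_vac limY_jacobi.

Definition incl_hom (i : ds_idx D) : vhom (alpha i) limW :=
  @Defs.Hom _ _ (alpha i) limW (incl D i) (@incl_lin K V D i)
    (fun u n x => esym (inclY u n x)).

(* Comparison with the concrete limit: in any direct limit (L, phi), a vector
   killed by phi_i already vanishes at some later stage of the system. *)
Lemma dirlim_ker (L : wmod V) (phi : forall i, vhom (alpha i) L) :
  is_dir_limit f phi -> forall i (x : alpha i),
  phi i x = 0 -> exists k (h : le i k), f h x = 0.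
Proof.
move=> [_ univ] i x phix0.
have [|g [g_phi _]] := univ limW incl_hom.
  by move=> i' j' h y /=; rewrite -incl_map.
have /incl_eq[k [h1 [h2 E]]] : incl D i x = incl D i 0.
  by rewrite raddf0 -[incl D i x]/(incl_hom i x) -g_phi phix0 raddf0.
by exists k, h1; rewrite E raddf0.
Qed.
End LimitModule.

(* A finitely generated submodule of alpha i whose vectors each vanish at some
   later stage vanishes as a whole at a single later stage: a common stage j
   for the generators suffices, because the kernel of f_i^j is a submodule. *)
Lemma fin_gen_vanish (K : fieldType) (V : voa K) (D : dirsys V) (i : ds_idx D)
    (M : submod (@ds_mod _ _ D i)) :
  fin_gen (submodW M) ->
  (forall x, smem M x -> exists k (h : ds_le i k), ds_map h x = 0) ->
  exists j (h : ds_le i j), forall x, smem M x -> ds_map h x = 0.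
Proof.
move=> [s gen_s] vanish.
have [|j [h kill_s]] := @ds_kill_seq _ _ D i (map val s).
  by move=> _ /mapP[y _ ->]; apply/vanish/asboolP/(valP y).
exists j, h => x Mx.
suff /(_ (Sub x (asboolT Mx))) : forall y : submodW M, ds_map h (val y) = 0 by [].
apply: gen_s => [|y sy]; last by apply/kill_s/map_f.
split=> [|a y z hy hz|u n y hy]; first exact: raddf0.
  by rewrite /= hfun_lin hy hz scaler0 addr0.
by rewrite /= hfun_Y hy raddf0.
Qed.

Unset Implicit Arguments.
Theorem lemma4 (V : voa CC) (Ccl : wmod V -> Prop) (HC : good_subcat Ccl)
    (I : Type) (le : rel I) (HI : directed le)
    (alpha : I -> wmod V) (Halpha : forall i, Ccl (alpha i))
    (f : forall i j, le i j -> vhom (alpha i) (alpha j))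
    (Hf : dir_system f)
    (L : wmod V) (phi : forall i, vhom (alpha i) L)
    (Hlim : is_dir_limit f phi) :
  forall i : I, exists j : I, exists h : le i j,
    forall x : alpha i, phi i x = 0 <-> f i j h x = 0.
Proof.
move=> i; pose D := DirSys HI Hf i.
case: HC => _ [_ C_sub _ _ C_fg].
pose M := Submod (ker_submodule (phi i)).
have M_fg : fin_gen (submodW M).
  by apply/C_fg/(C_sub _ _ (submod_emb M)); [apply: Halpha | apply: submod_emb_inj].
have [j [h ker_j]] := @fin_gen_vanish _ _ D i M M_fg (@dirlim_ker _ _ D L phi Hlim i).
exists j, h => x; split; first exact: ker_j.
by case: Hlim => compat _ fx0; rewrite -(compat _ _ h) fx0 raddf0.
Qed.
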